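(* For relatively prime integers $r, s$ put $u = r^2 + s^2$, $v = 2r^2 - s^2$, and $\mathcal{S} = \{\pm u(u+v),\ \pm u(u-v),\ \pm v(u+v),\ \pm v(u-v)\}$. Then for all but finitely many pairs $(r,s)$ of relatively prime integers with $r \neq 0$, no element of $\mathcal{S}$ represents the same class in $\mathbb{Q}^\times/(\mathbb{Q}^\times)^2$ as any of $uv, -uv, u^2-v^2, -(u^2-v^2)$.
   Context: $\mathbb{Q}^\times/(\mathbb{Q}^\times)^2$ denotes the group of nonzero rationals modulo nonzero squares; two nonzero rationals represent the same class iff their quotient is a square of a rational. *)

From HB Require Import structures.
From mathcomp Require Import all_boot all_order all_algebra.
Set Implicit Arguments. Unset Strict Implicit. Unset Printing Implicit Defensive.
Import Order.TTheory GRing.Theory Num.Theory.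
Local Open Scope ring_scope.

(* Two nonzero rationals represent the same class in Q^x/(Q^x)^2
   iff their quotient is the square of a rational. *)
Definition same_sqclass (a b : rat) : Prop :=
  a != 0 /\ b != 0 /\ exists q : rat, a / b = q ^+ 2.

Definition uval (r s : int) : int := r ^+ 2 + s ^+ 2.
Definition vval (r s : int) : int := 2 * r ^+ 2 - s ^+ 2.

Definition Sset (r s : int) : seq int :=
  let u := uval r s in let v := vval r s in
  [:: u * (u + v); - (u * (u + v)); u * (u - v); - (u * (u - v));
      v * (u + v); - (v * (u + v)); v * (u - v); - (v * (u - v))].

Definition Tset (r s : int) : seq int :=
  let u := uval r s in let v := vval r s in
  [:: u * v; - (u * v); u ^+ 2 - v ^+ 2; - (u ^+ 2 - v ^+ 2)].

From HB Require Import structures.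
From mathcomp Require Import all_boot all_order all_algebra.
From mathcomp Require Import zify ring.
Set Implicit Arguments. Unset Strict Implicit. Unset Printing Implicit Defensive.

(* Since u + v = 3 r^2 and u - v = 2 s^2 - r^2, both lists are closed under
   negation and, modulo squares, every product x y with x in S and y in T is
   up to sign one of 3u, 3v, u (u - v) and v (u - v) (S0_T0_product).  If x
   and y had the same square class, x y would be a square, so the absolute
   value of one of these four numbers would be a nonzero square.  This is
   impossible (classes_not_sq):
   - u and v are prime to 3 (squares modulo 3), so 3u and 3v are no squares;
   - in u (u - v) and v (u - v) the two factors are coprime, hence both would
     be squares; the possible sign patterns are excluded modulo 8 or by
     Fermat-style infinite descents on natural numbers, showing that for
     coprime arguments r^2 + s^2 and r^2 - 2 s^2 are never both squares
     (no_sq_sum_sq_double_diff), that x^2 + y^2 and 4 x^2 + y^2 are never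
     both squares (no_double_pyth), and, reducing to the latter with the
     four-number lemma, that 2 r^2 - s^2 and 2 s^2 - r^2 are never both
     squares (no_sq_double_diffs). *)

Lemma coprime_common_dvd a b d : coprime a b -> d %| a -> d %| b -> d = 1.
Proof.
move=> cab da db; have : d %| gcdn a b by rewrite dvdn_gcd da db.
by rewrite (eqP cab) dvdn1 => /eqP.
Qed.

Lemma coprime_of_common_dvd a b :
  (forall d, d %| a -> d %| b -> d = 1) -> coprime a b.
Proof. by move=> H; apply/eqP/H; [exact: dvdn_gcdl | exact: dvdn_gcdr]. Qed.

Lemma coprime_not_both_mod p a b :
  1 < p -> coprime a b -> ~ (a %% p = 0 /\ b %% p = 0).
Proof.
move=> p1 cab [ha hb]; have := @coprime_common_dvd a b p cab.
by rewrite /dvdn ha hb => /(_ isT isT) p_eq1; rewrite p_eq1 in p1.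
Qed.

Lemma sq_mod8 x :
  (x %% 2 = 0 /\ (x ^ 2 %% 8 = 0 \/ x ^ 2 %% 8 = 4)) \/ (x %% 2 = 1 /\ x ^ 2 %% 8 = 1).
Proof.
have -> : x %% 2 = (x %% 8) %% 2 by rewrite modn_dvdm.
rewrite -modnXm; have : x %% 8 < 8 := ltn_pmod x (isT : 0 < 8).
by case: (x %% 8) => [|[|[|[|[|[|[|[|i]]]]]]]]; lia.
Qed.

Lemma sq_mod3 x : (x %% 3 = 0 /\ x ^ 2 %% 3 = 0) \/ (x %% 3 <> 0 /\ x ^ 2 %% 3 = 1).
Proof.
rewrite -modnXm; have : x %% 3 < 3 := ltn_pmod x (isT : 0 < 3).
by case: (x %% 3) => [|[|[|i]]]; lia.
Qed.

Lemma gcdn_sq m n : gcdn (m ^ 2) (n ^ 2) = (gcdn m n) ^ 2.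
Proof.
have [g0|gpos] := posnP (gcdn m n).
  have := gcdn_gt0 m n; rewrite g0 /= => /esym/norP[].
  by rewrite -!leqNgt !leqn0 => /eqP-> /eqP->.
set g := gcdn m n in gpos *.
have Em : m = m %/ g * g by rewrite divnK // dvdn_gcdl.
have En : n = n %/ g * g by rewrite divnK // dvdn_gcdr.
have cop : coprime (m %/ g) (n %/ g).
  by rewrite /coprime -(eqn_pmul2r gpos) mul1n muln_gcdl -Em -En.
rewrite Em En !expnMn -muln_gcdl.
by rewrite (eqP (coprimeXl 2 (coprimeXr 2 cop))) mul1n.
Qed.

Lemma coprime_mul_sq a b k : coprime a b -> a * b = k ^ 2 ->
  exists x y, [/\ a = x ^ 2, b = y ^ 2 & k = x * y].
Proof.
have sq_factor c d : coprime c d -> c * d = k ^ 2 -> c = (gcdn c k) ^ 2.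
  by move=> ccd E; rewrite -gcdn_sq -E expnS expn1 -muln_gcdr (eqP ccd) muln1.
move=> cab E; exists (gcdn a k), (gcdn b k).
have Ha := sq_factor a b cab E.
have Hb : b = (gcdn b k) ^ 2.
  by apply: (sq_factor b a); rewrite 1?coprime_sym 1?mulnC.
split=> //; apply: (@expIn 2 isT); by rewrite expnMn -Ha -Hb.
Qed.

Lemma sq_cofactor c n k : 0 < c -> c ^ 2 * n = k ^ 2 -> exists t, n = t ^ 2.
Proof.
move=> cpos E; have : c ^ 2 %| k ^ 2 by rewrite -E dvdn_mulr.
rewrite dvdn_pexp2r // => /dvdnP[t Ek]; exists t.
have c2pos : 0 < c ^ 2 by rewrite expn_gt0 cpos.
by apply/eqP; rewrite -(eqn_pmul2l c2pos) E Ek expnMn mulnC.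
Qed.

Lemma four_number a b c d : a * b = c * d ->
  exists p q r t, [/\ a = p * q, b = r * t, c = p * r & d = q * t].
Proof.
have [->|apos] := posnP a.
  rewrite mul0n => /esym/eqP; rewrite muln_eq0 => /orP[/eqP->|/eqP->].
    by exists 0, d, b, 1; split; lia.
  by exists c, 0, 1, b; split; lia.
move=> E; set g := gcdn a c.
have gpos : 0 < g by rewrite gcdn_gt0 apos.
have Ea : a = a %/ g * g by rewrite divnK // dvdn_gcdl.
have Ec : c = c %/ g * g by rewrite divnK // dvdn_gcdr.
have cop : coprime (a %/ g) (c %/ g).
  by rewrite /coprime -(eqn_pmul2r gpos) mul1n muln_gcdl -Ea -Ec.
have qpos : 0 < a %/ g by rewrite divn_gt0 // dvdn_leq // dvdn_gcdl.
have E2 : a %/ g * b = c %/ g * d.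
  by apply/eqP; rewrite -(eqn_pmul2r gpos) mulnAC -Ea mulnAC -Ec E.
have : a %/ g %| c %/ g * d by rewrite -E2 dvdn_mulr.
rewrite Gauss_dvdr // => /dvdnP[t Ed].
exists g, (a %/ g), (c %/ g), t; split.
- by rewrite mulnC -Ea.
- by apply/eqP; rewrite -(eqn_pmul2l qpos) E2 Ed; apply/eqP; ring.
- by rewrite mulnC -Ec.
- by rewrite Ed mulnC.
Qed.

Lemma coprime_mul_double_sq_even a b sigma :
  coprime a b -> a * b = 2 * sigma ^ 2 -> a %% 2 = 0 ->
  exists p q, [/\ a + b = 2 * p ^ 2 + q ^ 2, sigma = p * q & coprime p q].
Proof.
move=> cab E a_even.
have Ea : a = 2 * (a %/ 2) by lia.
have E' : a %/ 2 * b = sigma ^ 2 by nia.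
have c' : coprime (a %/ 2) b by apply: coprime_dvdl cab; rewrite {2}Ea dvdn_mull.
have [p [q [Ha Hb Hsigma]]] := coprime_mul_sq c' E'.
exists p, q; split=> //; first by rewrite Ea Ha Hb.
by move: c'; rewrite Ha Hb coprime_pexpl // coprime_pexpr.
Qed.

Lemma coprime_mul_double_sq a b sigma :
  coprime a b -> a * b = 2 * sigma ^ 2 ->
  exists p q, [/\ a + b = 2 * p ^ 2 + q ^ 2, sigma = p * q & coprime p q].
Proof.
move=> cab E.
have [a_even|b_even] : a %% 2 = 0 \/ b %% 2 = 0.
  have : ~~ odd (a * b) by rewrite E oddM.
  rewrite oddM negb_and !modn2; case: (odd a); case: (odd b); by [left|right|].
- exact: coprime_mul_double_sq_even cab E a_even.
- rewrite addnC; apply: coprime_mul_double_sq_even b_even.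
  + by rewrite coprime_sym.
  + by rewrite mulnC.
Qed.

Lemma common_dvd_3sq k a b : coprime a b ->
  k %| 3 * a ^ 2 -> k %| 3 * b ^ 2 -> k = 1 \/ k = 3.
Proof.
move=> cab ha hb.
have : k %| gcdn (3 * a ^ 2) (3 * b ^ 2) by rewrite dvdn_gcd ha hb.
rewrite -muln_gcdr (eqP (coprimeXl 2 (coprimeXr 2 cab))) muln1 => k3.
have : k <= 3 by exact: dvdn_leq.
by move: k3; case: k {ha hb} => [|[|[|[|k]]]] //= _ _; [left|right].
Qed.

Lemma coprime_sq_sum_neq_3sq a b c : coprime a b -> a ^ 2 + b ^ 2 <> 3 * c ^ 2.
Proof.
move=> cab E; have nc := coprime_not_both_mod (isT : 1 < 3) cab.
by have := sq_mod3 a; have := sq_mod3 b; lia.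
Qed.

Lemma diff_sq_split x y : x %% 2 = y %% 2 -> y <= x ->
  exists a b, [/\ x = a + b, y + 2 * a = x, x ^ 2 = y ^ 2 + 4 * (a * b)
              & forall d, d %| a -> d %| b -> d %| x /\ d %| y].
Proof.
move=> xy yx; set a := (x - y) %/ 2; set b := (x + y) %/ 2.
have [Ex Ey] : x = a + b /\ y + 2 * a = x by rewrite /a /b; lia.
exists a, b; split=> //.
- have Eb : b = y + a by rewrite /a /b; lia.
  by rewrite Ex Eb; ring.
- move=> d da db; have dx : d %| x by rewrite Ex dvdn_add.
  by split=> //; move: dx; rewrite -Ey dvdn_addl // dvdn_mull.
Qed.

(* If 4 z^2 + y^2 = w^2 with z, y coprime and w, y of equal parity, then
   (w - y)/2 = g^2 and (w + y)/2 = h^2 give z = g h and y + g^2 = h^2. *)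
Lemma four_sq_plus_sq_factor z y w :
  coprime z y -> w %% 2 = y %% 2 -> y <= w -> 4 * z ^ 2 + y ^ 2 = w ^ 2 ->
  exists g h, [/\ z = g * h, y + g ^ 2 = h ^ 2 & coprime g h].
Proof.
move=> czy wy yw E.
have [a [b [Ew Ey Esq dvd_ab]]] := diff_sq_split wy yw.
have Eab : a * b = z ^ 2 by move: E Esq; move: (a * b) (z ^ 2); lia.
have cab : coprime a b.
  apply: coprime_of_common_dvd => d da db; have [_ dy] := dvd_ab d da db.
  have : d ^ 2 %| z ^ 2 by rewrite -Eab expnS expn1 dvdn_mul.
  by rewrite dvdn_pexp2r // => dz; exact: coprime_common_dvd czy dz dy.
have [g [h [Ha Hb Hz]]] := coprime_mul_sq cab Eab.
exists g, h; split=> //; first by rewrite -Ha -Hb; lia.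
by move: cab; rewrite Ha Hb coprime_pexpl // coprime_pexpr.
Qed.

(* First factorization in the descent: if r^2 = 2 s^2 + b^2 with s = 2 sigma,
   then (r - b)/2 * (r + b)/2 = 2 sigma^2 with coprime factors, whence
   r = 2 p^2 + q^2 and sigma = p q. *)
Lemma double_diff_factor r s b sigma :
  coprime r s -> odd r -> s = 2 * sigma -> r %% 2 = b %% 2 -> b <= r ->
  r ^ 2 = 2 * s ^ 2 + b ^ 2 ->
  exists p q, [/\ r = 2 * p ^ 2 + q ^ 2, sigma = p * q & coprime p q].
Proof.
move=> cop ro Es rb br E.
have [al [be [Hr _ Esq dvd_rb]]] := diff_sq_split rb br.
have Eab : al * be = 2 * sigma ^ 2.
  by move: E Esq; rewrite Es expnMn; move: (al * be) (sigma ^ 2); lia.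
have cab : coprime al be.
  apply: coprime_of_common_dvd => d da db; have [dr _] := dvd_rb d da db.
  have : d ^ 2 %| 2 * sigma ^ 2 by rewrite -Eab expnS expn1 dvdn_mul.
  rewrite Gauss_dvdr ?coprime_pexpl ?coprimen2 ?(dvdn_odd dr ro) //.
  rewrite dvdn_pexp2r // => ds.
  by apply: (coprime_common_dvd cop dr); rewrite Es dvdn_mull.
have [p [q [Hpq Hsig cpq]]] := coprime_mul_double_sq cab Eab.
by exists p, q; rewrite Hr.
Qed.

(* Recombination: from 2 p^2 + q^2 + g^2 = h^2 and g h = p q, the four-number
   lemma yields a new solution (T, P, R, Q) of the system with P <= p. *)
Lemma sq_sum_double_diff_recombine p q g h :
  coprime p q -> 0 < p -> 0 < q -> g * h = p * q ->
  2 * p ^ 2 + q ^ 2 + g ^ 2 = h ^ 2 ->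
  exists r' s' a' b', [/\ coprime r' s', 0 < s', s' <= p,
    r' ^ 2 + s' ^ 2 = a' ^ 2 & r' ^ 2 = 2 * s' ^ 2 + b' ^ 2].
Proof.
move=> cpq ppos qpos Egh E.
have [P [Q [R [T [HP HQ HR HT]]]]] := four_number Egh.
have [cPT cQR] : coprime P T /\ coprime Q R.
  move: cpq; rewrite HR HT coprimeMl !coprimeMr => /andP[/andP[_ ->]].
  by case/andP; rewrite coprime_sym.
have [Ppos Rpos] : 0 < P /\ 0 < R by apply/andP; rewrite -muln_gt0 -HR.
have T2pos : 0 < T ^ 2 by move: qpos; rewrite HT muln_gt0 expn_gt0 => /andP[_ ->].
have Eq : P ^ 2 * (Q ^ 2 + 2 * R ^ 2) + Q ^ 2 * T ^ 2 = R ^ 2 * T ^ 2.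
  by move: E; rewrite HP HQ HR HT !expnMn; move: (P ^ 2) (Q ^ 2) (R ^ 2) (T ^ 2); lia.
have [k Hk] : exists k, Q ^ 2 + 2 * R ^ 2 = k * T ^ 2.
  have cTP : coprime (T ^ 2) (P ^ 2) by rewrite coprimeXl // coprimeXr // coprime_sym.
  apply/dvdnP; rewrite -(Gauss_dvdr _ cTP).
  by rewrite -(dvdn_addl (P ^ 2 * _) (dvdn_mull (Q ^ 2) (dvdnn (T ^ 2)))) Eq dvdn_mull.
have ER : R ^ 2 = k * P ^ 2 + Q ^ 2.
  by apply/eqP; rewrite -(eqn_pmul2r T2pos) -Eq Hk; apply/eqP; ring.
have [k1|k3] : k = 1 \/ k = 3.
  apply: (common_dvd_3sq cQR); apply/dvdnP.
  - by exists (T ^ 2 - 2 * P ^ 2); move: Hk ER; move: (P ^ 2) (Q ^ 2) (R ^ 2) (T ^ 2); nia.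
  - by exists (P ^ 2 + T ^ 2); move: Hk ER; move: (P ^ 2) (Q ^ 2) (R ^ 2) (T ^ 2); nia.
- exfalso; apply: (coprime_sq_sum_neq_3sq cPT (c := R)).
  by move: Hk ER; rewrite k1; move: (P ^ 2) (Q ^ 2) (R ^ 2) (T ^ 2); lia.
- exists T, P, R, Q; split; rewrite 1?coprime_sym ?HR ?leq_pmulr //.
  + by move: Hk ER; rewrite k3; move: (P ^ 2) (Q ^ 2) (R ^ 2) (T ^ 2); lia.
  + by move: Hk ER; rewrite k3; move: (P ^ 2) (Q ^ 2) (R ^ 2) (T ^ 2); lia.
Qed.

Lemma sq_sum_double_diff_descent r s a b : coprime r s -> 0 < s ->
  r ^ 2 + s ^ 2 = a ^ 2 -> r ^ 2 = 2 * s ^ 2 + b ^ 2 ->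
  exists r' s' a' b', [/\ coprime r' s', 0 < s', s' < s,
    r' ^ 2 + s' ^ 2 = a' ^ 2 & r' ^ 2 = 2 * s' ^ 2 + b' ^ 2].
Proof.
move=> cop spos E1 E2.
have nc := coprime_not_both_mod (isT : 1 < 2) cop.
have [s_even [r_odd [b_odd a_odd]]] :
    s %% 2 = 0 /\ r %% 2 = 1 /\ b %% 2 = 1 /\ a %% 2 = 1.
  by have := sq_mod8 r; have := sq_mod8 s; have := sq_mod8 a; have := sq_mod8 b; lia.
have Es : s = 2 * (s %/ 2) by lia.
have ro : odd r by move: r_odd; rewrite modn2; case: (odd r).
have br : b <= r by rewrite -leq_sqr E2 leq_addl.
have ra : r <= a by rewrite -leq_sqr -E1 leq_addr.
have [p [q [Er Hpq cpq]]] :=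
  double_diff_factor cop ro Es (etrans r_odd (esym b_odd)) br E2.
have cop' : coprime (s %/ 2) r.
  by apply: (@coprime_dvdl _ s); [rewrite {2}Es dvdn_mull | rewrite coprime_sym].
have E1_half : 4 * (s %/ 2) ^ 2 + r ^ 2 = a ^ 2.
  by rewrite -E1 {2}Es expnMn addnC.
have [g [h [Hgh Egh _]]] :=
  four_sq_plus_sq_factor cop' (etrans a_odd (esym r_odd)) ra E1_half.
have [ppos qpos] : 0 < p /\ 0 < q by apply/andP; rewrite -muln_gt0 -Hpq; lia.
have Epqgh : 2 * p ^ 2 + q ^ 2 + g ^ 2 = h ^ 2 by rewrite -Egh Er.
have [r' [s' [a' [b' [c' s'pos s'p E1' E2']]]]] :=
  sq_sum_double_diff_recombine cpq ppos qpos (etrans (esym Hgh) Hpq) Epqgh.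
have p_lt_s : p < s by rewrite Es Hpq; have := leq_pmulr p qpos; lia.
by exists r', s', a', b'; split=> //; exact: leq_ltn_trans s'p p_lt_s.
Qed.

Lemma no_sq_sum_sq_double_diff r s a b : coprime r s -> 0 < s ->
  r ^ 2 + s ^ 2 = a ^ 2 -> r ^ 2 = 2 * s ^ 2 + b ^ 2 -> False.
Proof.
elim/ltn_ind: s r a b => s IH r a b cop spos E1 E2.
have [r' [s' [a' [b' [c' s'pos lt_s E1' E2']]]]] := sq_sum_double_diff_descent cop spos E1 E2.
exact: IH lt_s r' a' b' c' s'pos E1' E2'.
Qed.

Definition double_pyth x y : Prop :=
  [/\ coprime x y, 0 < x, 0 < y,
      exists u, x ^ 2 + y ^ 2 = u ^ 2 & exists v, 4 * x ^ 2 + y ^ 2 = v ^ 2].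

(* If d^2 + a^2 = k b^2 and d^2 + 4 a^2 = k c^2 for coprime a, d, then
   k divides 3 a^2 and 3 d^2, and k = 3 is excluded modulo 3. *)
Lemma double_pyth_common_factor a d b c k : coprime a d ->
  d ^ 2 + a ^ 2 = k * b ^ 2 -> d ^ 2 + 4 * a ^ 2 = k * c ^ 2 -> k = 1.
Proof.
move=> cad E1 E2; have [//|k3] : k = 1 \/ k = 3.
  apply: (common_dvd_3sq cad); apply/dvdnP.
  - by exists (c ^ 2 - b ^ 2); move: E1 E2; move: (a ^ 2) (b ^ 2) (c ^ 2) (d ^ 2); nia.
  - by exists (4 * b ^ 2 - c ^ 2); move: E1 E2; move: (a ^ 2) (b ^ 2) (c ^ 2) (d ^ 2); nia.
by exfalso; apply: (coprime_sq_sum_neq_3sq cad (c := b)); rewrite addnC E1 k3.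
Qed.

Lemma double_pyth_recombine alpha beta m n :
  coprime alpha beta -> coprime m n -> 0 < alpha -> 0 < beta ->
  alpha * beta = m * n -> beta ^ 2 + m ^ 2 = n ^ 2 + 4 * alpha ^ 2 ->
  exists a d, [/\ double_pyth a d, a <= alpha & d <= beta].
Proof.
move=> cab cmn apos bpos Eab E.
have [A [B [C [D [HA HB HC HD]]]]] := four_number Eab.
have [Apos Bpos] : 0 < A /\ 0 < B by apply/andP; rewrite -muln_gt0 -HA.
have [Cpos Dpos] : 0 < C /\ 0 < D by apply/andP; rewrite -muln_gt0 -HB.
have cAD : coprime A D.
  apply: (@coprime_dvdl _ m); first by rewrite HC dvdn_mulr.
  by apply: coprime_dvdr cmn; rewrite HD dvdn_mull.
have cBC : coprime (B ^ 2) (C ^ 2).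
  rewrite coprimeXl // coprimeXr //.
  apply: (@coprime_dvdl _ alpha); first by rewrite HA dvdn_mull.
  by apply: coprime_dvdr cab; rewrite HB dvdn_mulr.
have Eq : C ^ 2 * (D ^ 2 + A ^ 2) = B ^ 2 * (D ^ 2 + 4 * A ^ 2).
  by move: E; rewrite HA HB HC HD !expnMn; move: (A ^ 2) (B ^ 2) (C ^ 2) (D ^ 2); nia.
have [k Hk] : exists k, D ^ 2 + A ^ 2 = k * B ^ 2.
  by apply/dvdnP; rewrite -(Gauss_dvdr _ cBC) Eq dvdn_mulr.
have Hk2 : D ^ 2 + 4 * A ^ 2 = k * C ^ 2.
  have B2pos : 0 < B ^ 2 by rewrite expn_gt0 Bpos.
  by apply/eqP; rewrite -(eqn_pmul2l B2pos) -Eq Hk; apply/eqP; ring.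
have k1 := double_pyth_common_factor cAD Hk Hk2.
exists A, D; split; rewrite ?HA ?HB ?leq_pmulr ?leq_pmull //.
by split=> //; [exists B; rewrite addnC Hk k1 mul1n | exists C; rewrite addnC Hk2 k1 mul1n].
Qed.

Lemma double_pyth_even x y : double_pyth x y -> y %% 2 = 0 -> double_pyth (y %/ 2) x.
Proof.
case=> cop xpos ypos [u Eu] [v Ev] y_even.
have nc := coprime_not_both_mod (isT : 1 < 2) cop.
have [Ey Ev2] : y = 2 * (y %/ 2) /\ v = 2 * (v %/ 2).
  by have := sq_mod8 x; have := sq_mod8 y; have := sq_mod8 u; have := sq_mod8 v; lia.
split=> //; first by rewrite coprime_sym; apply: coprime_dvdr cop; rewrite {2}Ey dvdn_mull.
- by lia.
- exists (v %/ 2); move: Ev; rewrite {1}Ey {1}Ev2 !expnMn.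
  by move: (x ^ 2) ((y %/ 2) ^ 2) ((v %/ 2) ^ 2); lia.
- exists u; move: Eu; rewrite {1}Ey !expnMn.
  by move: (x ^ 2) ((y %/ 2) ^ 2) (u ^ 2); lia.
Qed.

(* If y is odd, then x is even, and (v^2 - y^2)/4 = x^2, (u^2 - y^2)/4 = (x/2)^2
   factor as x = g h, x/2 = m n; recombining gives a pair with smaller sum. *)
Lemma double_pyth_odd x y : double_pyth x y -> y %% 2 = 1 ->
  exists a d, double_pyth a d /\ a + d < x + y.
Proof.
case=> cop xpos ypos [u Eu] [v Ev] y_odd.
have nc := coprime_not_both_mod (isT : 1 < 2) cop.
have [Ex [v_odd u_odd]] : x = 2 * (x %/ 2) /\ v %% 2 = 1 /\ u %% 2 = 1.
  by have := sq_mod8 x; have := sq_mod8 y; have := sq_mod8 u; have := sq_mod8 v; lia.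
have yv : y <= v by rewrite -leq_sqr -Ev leq_addl.
have yu : y <= u by rewrite -leq_sqr -Eu leq_addl.
have [g [h [Hx Egh cgh]]] := four_sq_plus_sq_factor cop (etrans v_odd (esym y_odd)) yv Ev.
have cop2 : coprime (x %/ 2) y by apply: coprime_dvdl cop; rewrite {2}Ex dvdn_mull.
have Eu2 : 4 * (x %/ 2) ^ 2 + y ^ 2 = u ^ 2 by rewrite -Eu {2}Ex expnMn.
have [m [n [Hx2 Emn cmn]]] := four_sq_plus_sq_factor cop2 (etrans u_odd (esym y_odd)) yu Eu2.
have Egh2 : g * h = 2 * (m * n) by rewrite -Hx -Hx2.
have [gpos hpos] : 0 < g /\ 0 < h by apply/andP; rewrite -muln_gt0 -Hx.
have [g_even|h_even] : g %% 2 = 0 \/ h %% 2 = 0.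
  have : ~~ odd (g * h) by rewrite Egh2 oddM.
  rewrite oddM negb_and !modn2; case: (odd g); case: (odd h); by [left|right|].
- have [g' Eg] : exists g', g = 2 * g' by exists (g %/ 2); lia.
  subst g; have g'pos : 0 < g' by lia.
  have [a [d [pad ha hd]]] : exists a d, [/\ double_pyth a d, a <= g' & d <= h].
    apply: (double_pyth_recombine _ cmn) => //.
    + by apply: coprime_dvdl cgh; rewrite dvdn_mull.
    + by apply/eqP; rewrite -(eqn_pmul2l (isT : 0 < 2)) mulnA Egh2.
    + by move: Egh Emn; rewrite expnMn; move: (h ^ 2) (g' ^ 2) (m ^ 2) (n ^ 2); lia.
  exists a, d; split=> //; suff : g' + h <= x by lia.
  by rewrite Hx -mulnA mul2n -addnn leq_add // ?leq_pmulr ?leq_pmull.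
- have [h' Eh] : exists h', h = 2 * h' by exists (h %/ 2); lia.
  subst h; have h'pos : 0 < h' by lia.
  have [a [d [pad ha hd]]] : exists a d, [/\ double_pyth a d, a <= h' & d <= g].
    apply: (double_pyth_recombine _ (m := n) (n := m)) => //.
    + by rewrite coprime_sym; apply: coprime_dvdr cgh; rewrite dvdn_mull.
    + by rewrite coprime_sym.
    + by apply/eqP; rewrite -(eqn_pmul2l (isT : 0 < 2)) (mulnC n) -Egh2; apply/eqP; ring.
    + by move: Egh Emn; rewrite expnMn; move: (g ^ 2) (h' ^ 2) (m ^ 2) (n ^ 2); lia.
  exists a, d; split=> //; suff : h' + g <= x by lia.
  by rewrite Hx mulnCA mul2n -addnn leq_add // ?leq_pmulr ?leq_pmull.
Qed.

Lemma no_double_pyth x y : ~ double_pyth x y.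
Proof.
have [N lt_N] : exists N, x + y < N by exists (x + y).+1.
elim: N x y lt_N => [//|N IH] x y lt_N pxy.
have [/(double_pyth_even pxy) pyx | /(double_pyth_odd pxy) [a [d [pad lt_ad]]]] :
    y %% 2 = 0 \/ y %% 2 = 1 by lia.
- by apply: IH pyx; case: pxy => _ _ ypos _ _; lia.
- by apply: IH pad; lia.
Qed.

Lemma coprime_sq_diff x y M : coprime x y -> M + y ^ 2 = x ^ 2 ->
  coprime x M /\ coprime y M.
Proof.
move=> cxy E; split; apply: coprime_of_common_dvd => d dxy dM.
- have : d %| M + y ^ 2 by rewrite E expnS expn1 dvdn_mulr.
  by rewrite dvdn_addr // => dy; exact: coprime_common_dvd (coprimeXr 2 cxy) dxy dy.
- have : d %| M + y ^ 2 by rewrite dvdn_add // expnS expn1 dvdn_mulr.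
  by rewrite E => dx; exact: coprime_common_dvd (coprimeXl 2 cxy) dx dxy.
Qed.

Lemma sq_of_quadruple_sq w z : w ^ 2 = 4 * z -> exists w', z = w' ^ 2.
Proof.
move=> E; have [w' Ew] : exists w', w = 2 * w'.
  by exists (w %/ 2); have := sq_mod8 w; lia.
by exists w'; move: E; rewrite Ew expnMn; lia.
Qed.

Lemma sq_diff_product_divisors k l m n M N :
  coprime m l -> coprime n k -> M + l ^ 2 = m ^ 2 -> N + k ^ 2 = n ^ 2 ->
  M * N = 2 * (k * l * m * n) -> 0 < k * l * m * n ->
  exists f e, [/\ M = f * (k * n), N = e * (m * l) & f * e = 2].
Proof.
move=> cml cnk EM EN EMN Kpos.
have [cmM clM] := coprime_sq_diff cml EM.
have [cnN ckN] := coprime_sq_diff cnk EN.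
have [dm dl dk dn] : [/\ m %| M * N, l %| M * N, k %| M * N & n %| M * N].
  rewrite EMN; split; apply/dvdnP.
  - by exists (2 * k * l * n); ring.
  - by exists (2 * k * m * n); ring.
  - by exists (2 * l * m * n); ring.
  - by exists (2 * k * l * m); ring.
have [e He] : exists e, N = e * (m * l).
  apply/dvdnP; rewrite Gauss_dvd //.
  by rewrite -(Gauss_dvdr _ cmM) dm -(Gauss_dvdr _ clM) dl.
have [f Hf] : exists f, M = f * (k * n).
  apply/dvdnP; rewrite Gauss_dvd 1?coprime_sym //.
  by rewrite -(Gauss_dvdl _ ckN) dk -(Gauss_dvdl _ cnN) dn.
exists f, e; split=> //; apply/eqP; rewrite -(eqn_pmul2r Kpos); apply/eqP.
have -> : f * e * (k * l * m * n) = M * N by rewrite Hf He; ring.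
by rewrite EMN; ring.
Qed.

(* If k^2 m^2 + l^2 n^2 + 2 k l m n = k^2 l^2 + m^2 n^2 with l < m and k < n,
   i.e. (m^2 - l^2)(n^2 - k^2) = 2 k l m n, then (n k, n^2 - k^2) would be a
   double_pyth pair. *)
Lemma sq_identity_impossible k l m n : coprime m l -> coprime n k ->
  0 < k -> 0 < l -> l < m -> k < n ->
  k ^ 2 * m ^ 2 + l ^ 2 * n ^ 2 + 2 * (k * l * m * n) = k ^ 2 * l ^ 2 + m ^ 2 * n ^ 2 ->
  False.
Proof.
move=> cml cnk kpos lpos lm kn E.
have [mpos npos] : 0 < m /\ 0 < n by lia.
have [l2m2 k2n2] : l ^ 2 < m ^ 2 /\ k ^ 2 < n ^ 2 by rewrite !ltn_sqr.
have [M EM] : exists M, M + l ^ 2 = m ^ 2 by exists (m ^ 2 - l ^ 2); rewrite subnK // ltnW.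
have [N EN] : exists N, N + k ^ 2 = n ^ 2 by exists (n ^ 2 - k ^ 2); rewrite subnK // ltnW.
have Npos : 0 < N by move: k2n2; rewrite -EN; lia.
have EMN : M * N = 2 * (k * l * m * n).
  move: (k * l * m * n) (k ^ 2) (l ^ 2) (m ^ 2) (n ^ 2) E EM EN.
  by move=> K a b c d E EM EN; subst c d; nia.
have Kpos : 0 < k * l * m * n by rewrite !muln_gt0 kpos lpos mpos npos.
have [f [e [Hf He Efe]]] := sq_diff_product_divisors cml cnk EM EN EMN Kpos.
have [cnN ckN] := coprime_sq_diff cnk EN.
apply: (@no_double_pyth (n * k) N); split=> //.
- by rewrite coprimeMl cnN ckN.
- by rewrite muln_gt0 npos kpos.
- have [[f1 e2]|[f2 e1]] : (f = 1 /\ e = 2) \/ (f = 2 /\ e = 1).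
    have f_le2 : f <= 2 by apply: dvdn_leq => //; rewrite -Efe dvdn_mulr.
    by move: Efe f_le2; case: f {Hf} => [|[|[|f]]]; lia.
  + have -> : n * k = M by rewrite Hf f1 mul1n mulnC.
    by exists (m ^ 2 + l ^ 2); rewrite He e2 !expnMn -EM; ring.
  + have : (m ^ 2 + l ^ 2) ^ 2 = 4 * ((n * k) ^ 2 + N ^ 2).
      by rewrite He e1 mul1n !expnMn -EM Hf f2; ring.
    exact: sq_of_quadruple_sq.
- by exists (n ^ 2 + k ^ 2); rewrite !expnMn -EN; ring.
Qed.

(* c a + b e + 2 K = c b + a e says (b - a)(e - c) = - 2 K, which fails for
   K > 0 when b - a and e - c have the same sign. *)
Lemma cross_identity_same_sign a b c e K : 0 < K ->
  (a <= b /\ c <= e) \/ (b <= a /\ e <= c) ->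
  c * a + b * e + 2 * K = c * b + a * e -> False.
Proof.
move=> Kpos [[ab ce]|[ba ec]].
- have [x ->] : exists x, b = a + x by exists (b - a); lia.
  have [y ->] : exists y, e = c + y by exists (e - c); lia.
  by nia.
- have [x ->] : exists x, a = b + x by exists (a - b); lia.
  have [y ->] : exists y, c = e + y by exists (c - e); lia.
  by nia.
Qed.

(* For coprime r < s with 2 r^2 = s^2 + c^2 and 2 s^2 = r^2 + d^2 (all odd),
   halving s +- c and d +- r gives s = Q + P with r^2 = P^2 + Q^2 and
   d = D1 + D2 with D2 = r + D1, where D1 D2 = P Q and both pairs are coprime. *)
Lemma sq_double_diffs_factor r s c d : coprime r s -> r < s ->
  2 * r ^ 2 = s ^ 2 + c ^ 2 -> 2 * s ^ 2 = r ^ 2 + d ^ 2 ->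
  exists P Q D1 D2, [/\ coprime P Q, coprime D1 D2, D1 * D2 = P * Q,
     r ^ 2 = P ^ 2 + Q ^ 2 & D2 = r + D1 /\ 0 < D1].
Proof.
move=> cop rs E1 E2.
have nc := coprime_not_both_mod (isT : 1 < 2) cop.
have [r_odd [s_odd [c_odd d_odd]]] :
    r %% 2 = 1 /\ s %% 2 = 1 /\ c %% 2 = 1 /\ d %% 2 = 1.
  by have := sq_mod8 r; have := sq_mod8 s; have := sq_mod8 c; have := sq_mod8 d; lia.
have ro : odd r by move: r_odd; rewrite modn2; case: (odd r).
have rs2 : r ^ 2 < s ^ 2 by rewrite ltn_sqr.
have cs : c <= s by rewrite -leq_sqr; lia.
have rd : r < d by rewrite -ltn_sqr; lia.
have [Q [P [Es Ec Es2 dvd_QP]]] := diff_sq_split (etrans s_odd (esym c_odd)) cs.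
have Er : r ^ 2 = P ^ 2 + Q ^ 2.
  have [EP Es'] : P = c + Q /\ s = c + 2 * Q by lia.
  by apply/eqP; rewrite -(eqn_pmul2l (isT : 0 < 2)) E1 Es' EP; apply/eqP; ring.
have [D1 [D2 [Ed Ed' Ed2 dvd_D]]] := diff_sq_split (etrans d_odd (esym r_odd)) (ltnW rd).
exists P, Q, D1, D2; split=> //; last by split; lia.
- apply: coprime_of_common_dvd => k kP kQ; have [ks _] := dvd_QP k kQ kP.
  have : k ^ 2 %| r ^ 2 by rewrite Er dvdn_add // dvdn_exp2r.
  by rewrite dvdn_pexp2r // => kr; exact: coprime_common_dvd cop kr ks.
- apply: coprime_of_common_dvd => k k1 k2; have [kd kr] := dvd_D k k1 k2.
  have : k ^ 2 %| 2 * s ^ 2 by rewrite E2 dvdn_add // dvdn_exp2r.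
  rewrite Gauss_dvdr ?coprime_pexpl ?coprimen2 ?(dvdn_odd kr ro) // dvdn_pexp2r // => ks.
  exact: coprime_common_dvd cop kr ks.
- have Ess : s ^ 2 = r ^ 2 + 2 * (P * Q) by rewrite Es Er; ring.
  by move: E2 Ed2 Ess; move: (D1 * D2) (P * Q) (r ^ 2) (s ^ 2) (d ^ 2); lia.
Qed.

(* There are no coprime r < s for which 2 r^2 - s^2 and 2 s^2 - r^2 are
   both squares: the four-number lemma turns such a pair into the identity
   excluded by sq_identity_impossible. *)
Lemma no_sq_double_diffs r s c d : coprime r s -> r < s ->
  2 * r ^ 2 = s ^ 2 + c ^ 2 -> 2 * s ^ 2 = r ^ 2 + d ^ 2 -> False.
Proof.
move=> cop rs E1 E2.
have [P [Q [D1 [D2 [cPQ cD Edp Er [ED2 D1pos]]]]]] :=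
  sq_double_diffs_factor cop rs E1 E2.
have [k [l [m [n [H1 H2 HP HQ]]]]] := four_number Edp.
have cml : coprime m l.
  apply: (@coprime_dvdl _ P); first by rewrite HP dvdn_mull.
  by apply: coprime_dvdr cPQ; rewrite HQ dvdn_mulr.
have cnk : coprime n k.
  apply: (@coprime_dvdl _ D2); first by rewrite H2 dvdn_mull.
  by rewrite coprime_sym; apply: coprime_dvdl cD; rewrite H1 dvdn_mulr.
have [kpos lpos] : 0 < k /\ 0 < l by apply/andP; rewrite -muln_gt0 -H1.
have [mpos npos] : 0 < m /\ 0 < n by apply/andP; rewrite -muln_gt0 -H2; lia.
have Kpos : 0 < k * l * m * n by rewrite !muln_gt0 kpos lpos mpos npos.
have E : k ^ 2 * m ^ 2 + l ^ 2 * n ^ 2 + 2 * (k * l * m * n)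
         = k ^ 2 * l ^ 2 + m ^ 2 * n ^ 2.
  have -> : k ^ 2 * m ^ 2 + l ^ 2 * n ^ 2 + 2 * (k * l * m * n)
            = P ^ 2 + Q ^ 2 + 2 * (D1 * D2).
    by rewrite HP HQ H1 H2; ring.
  have -> : k ^ 2 * l ^ 2 + m ^ 2 * n ^ 2 = D1 ^ 2 + D2 ^ 2 by rewrite H1 H2; ring.
  by rewrite -Er ED2; ring.
have [[lm kn]|[[ml nk]|same]] : (l < m /\ k < n) \/ (m < l /\ n < k) \/
    ((m <= l /\ k <= n) \/ (l <= m /\ n <= k)) by lia.
- exact: sq_identity_impossible cml cnk kpos lpos lm kn E.
- apply: (sq_identity_impossible (k := n) (l := m) (m := l) (n := k)); rewrite 1?coprime_sym //.
  by move: E; lia.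
- apply: (cross_identity_same_sign Kpos _ E).
  by rewrite !leq_sqr.
Qed.

Lemma three_times_not_sq n m : ~~ (3 %| n) -> 3 * n <> m ^ 2.
Proof.
move=> n3 E; have : 3 %| m ^ 2 by rewrite -E dvdn_mulr.
rewrite Euclid_dvdX // andbT => m3.
have : 3 ^ 2 %| 3 * n by rewrite E dvdn_exp2r.
by rewrite (expnS 3 1) expn1 dvdn_pmul2l // (negbTE n3).
Qed.

Lemma not_3_dvd_sq_sum R S : coprime R S -> ~~ (3 %| R ^ 2 + S ^ 2).
Proof.
move=> cRS; have nc := coprime_not_both_mod (isT : 1 < 3) cRS.
by rewrite /dvdn; have := sq_mod3 R; have := sq_mod3 S; lia.
Qed.

Lemma not_3_dvd_sq_double_diff R S V : coprime R S ->
  V + S ^ 2 = 2 * R ^ 2 \/ 2 * R ^ 2 + V = S ^ 2 -> ~~ (3 %| V).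
Proof.
move=> cRS EV; have nc := coprime_not_both_mod (isT : 1 < 3) cRS.
by rewrite /dvdn; have := sq_mod3 R; have := sq_mod3 S; lia.
Qed.

Lemma coprime_via_3sq X Y R S : coprime R S -> ~~ (3 %| X) ->
  (forall d, d %| X -> d %| Y -> d %| 3 * R ^ 2 /\ d %| 3 * S ^ 2) -> coprime X Y.
Proof.
move=> cRS X3 H; apply: coprime_of_common_dvd => d dX dY.
have [hR hS] := H d dX dY.
have [//|d3] := common_dvd_3sq cRS hR hS.
by rewrite -d3 dX in X3.
Qed.

Lemma dvdn_linear d x y z : d %| x -> d %| y -> z + x = y \/ z = x + y -> d %| z.
Proof. by move=> dx dy [E|->]; [move: dy; rewrite -E dvdn_addl | rewrite dvdn_add]. Qed.

(* (R^2 + S^2) W, where W = |2 S^2 - R^2| > 0, is never a square unless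
   (R, S) = (1, 0): the coprime factors would both be squares, which is
   excluded modulo 8 when W = 2 S^2 - R^2 and by descent otherwise. *)
Lemma sq_sum_times_double_diff_not_sq R S W M :
  coprime R S -> 0 < R -> ~ (R = 1 /\ S = 0) -> 0 < W ->
  W + R ^ 2 = 2 * S ^ 2 \/ 2 * S ^ 2 + W = R ^ 2 -> (R ^ 2 + S ^ 2) * W <> M ^ 2.
Proof.
move=> cRS Rpos n10 Wpos EW E.
have cuW : coprime (R ^ 2 + S ^ 2) W.
  apply: (coprime_via_3sq cRS (not_3_dvd_sq_sum cRS)) => d du dW.
  case: EW => EW; split.
  - by apply: (dvdn_linear dW (dvdn_mull 2 du)); lia.
  - by apply: (dvdn_linear du dW); lia.
  - by apply: (dvdn_linear (dvdn_mull 2 du) dW); lia.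
  - by apply: (dvdn_linear dW du); lia.
have [a [b [Ha Hb _]]] := coprime_mul_sq cuW E.
have nc := coprime_not_both_mod (isT : 1 < 2) cRS.
case: EW => EW.
- by have := sq_mod8 R; have := sq_mod8 S; have := sq_mod8 a; have := sq_mod8 b; lia.
- have [S0|Spos] := posnP S.
    by apply: n10; split=> //; move: cRS; rewrite S0 /coprime gcdn0 => /eqP.
  by apply: (no_sq_sum_sq_double_diff cRS Spos Ha); rewrite -EW Hb.
Qed.

(* |2 R^2 - S^2| |2 S^2 - R^2| is never a nonzero square unless R = S = 1:
   both coprime factors would be squares, which is excluded modulo 8 unless
   2 R^2 - S^2 and 2 S^2 - R^2 are both positive squares, and that case is
   ruled out by no_sq_double_diffs. *)
Lemma double_diffs_product_not_sq R S V W M :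
  coprime R S -> 0 < R -> ~ (R = 1 /\ S = 1) -> 0 < V -> 0 < W ->
  V + S ^ 2 = 2 * R ^ 2 \/ 2 * R ^ 2 + V = S ^ 2 ->
  W + R ^ 2 = 2 * S ^ 2 \/ 2 * S ^ 2 + W = R ^ 2 -> V * W <> M ^ 2.
Proof.
move=> cRS Rpos n11 Vpos Wpos EV EW E.
have R2pos : 0 < R ^ 2 by rewrite expn_gt0 Rpos.
have not_both_neg : ~ (2 * R ^ 2 + V = S ^ 2 /\ 2 * S ^ 2 + W = R ^ 2) by lia.
have cVW : coprime V W.
  apply: (coprime_via_3sq cRS (not_3_dvd_sq_double_diff cRS EV)) => d dV dW.
  have [d2V d2W] : d %| 2 * V /\ d %| 2 * W by rewrite !dvdn_mull.
  case: EV => EV; case: EW => EW.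
  - by split; [apply: (dvdn_linear d2V dW) | apply: (dvdn_linear dV d2W)]; clear -EV EW; lia.
  - by split; [apply: (dvdn_linear dW d2V) | apply: (dvdn_linear d2W dV)]; clear -EV EW; lia.
  - by split; [apply: (dvdn_linear d2V dW) | apply: (dvdn_linear dV d2W)]; clear -EV EW; lia.
  - by case: not_both_neg.
have [c [d [Hc Hd _]]] := coprime_mul_sq cVW E.
have nc := coprime_not_both_mod (isT : 1 < 2) cRS.
have := sq_mod8 R; have := sq_mod8 S; have := sq_mod8 c; have := sq_mod8 d.
case: EV => EV; case: EW => EW; last by case: not_both_neg.
- move=> _ _ _ _; have E1 : 2 * R ^ 2 = S ^ 2 + c ^ 2 by rewrite -EV Hc addnC.
  have E2 : 2 * S ^ 2 = R ^ 2 + d ^ 2 by rewrite -EW Hd addnC.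
  case: (ltngtP R S) => [RS|SR|RS].
  + exact: no_sq_double_diffs cRS RS E1 E2.
  + by apply: (no_sq_double_diffs _ SR E2 E1); rewrite coprime_sym.
  + have R1 : R = 1 by move: cRS; rewrite -RS /coprime gcdnn => /eqP.
    by apply: n11; rewrite -RS R1.
- by clear -nc EV EW Hc Hd; lia.
- by clear -nc EV EW Hc Hd; lia.
Qed.

Import Order.TTheory GRing.Theory Num.Theory.
Local Open Scope ring_scope.

(* An integer that is a square in Q has a square absolute value: the
   denominator of the rational square root must be 1. *)
Lemma int_rat_sq (n : int) (q : rat) : n%:~R = q ^+ 2 -> exists K, `|n|%N = (K ^ 2)%N.
Proof.
move=> E; have Ez : n * denq q ^+ 2 = numq q ^+ 2.
  by apply: (@intr_inj rat); rewrite !expr2 !intrM -expr2 E numqE; ring.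
have En : (`|n| * `|denq q| ^ 2)%N = (`|numq q| ^ 2)%N.
  by rewrite -abszX -abszM Ez abszX.
have : (`|denq q| %| `|numq q|)%N by rewrite -(dvdn_pexp2r _ _ (isT : 0 < 2)%N) -En dvdn_mull.
move/(coprime_common_dvd (coprime_num_den q))/(_ (dvdnn _)) => d1.
by exists `|numq q|%N; rewrite -En d1 muln1.
Qed.

Lemma same_sqclass_product (x y : int) : same_sqclass x%:~R y%:~R ->
  [/\ x != 0, y != 0 & exists K, (`|x| * `|y| = K ^ 2)%N].
Proof.
case; rewrite !intr_eq0 => x0 [y0 [q Hq]]; split=> //.
have [K HK] : exists K, absz (x * y) = (K ^ 2)%N.
  apply: (@int_rat_sq _ (q * y%:~R)); rewrite intrM exprMn -Hq.
  by field; rewrite intr_eq0.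
by exists K; rewrite -abszM.
Qed.

Definition signed (l : seq int) : seq int := flatten [seq [:: a; - a] | a <- l].

Lemma mem_signed (l : seq int) x : x \in signed l -> exists2 a, a \in l & `|x|%N = `|a|%N.
Proof.
elim: l => //= a l IH; rewrite mem_cat => /orP[|/IH[b bl ->]].
  by rewrite !inE => /orP[]/eqP->; exists a; rewrite ?abszN ?inE ?eqxx.
by exists b; rewrite // inE bl orbT.
Qed.

Definition S0 (u v : int) : seq int := [:: u * (u + v); u * (u - v); v * (u + v); v * (u - v)].
Definition T0 (u v : int) : seq int := [:: u * v; u ^+ 2 - v ^+ 2].

Lemma Sset_signed r s : Sset r s = signed (S0 (uval r s) (vval r s)).
Proof. by []. Qed.

Lemma Tset_signed r s : Tset r s = signed (T0 (uval r s) (vval r s)).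
Proof. by []. Qed.

Lemma S0_T0_product (u v r x y : int) : u + v = 3 * r ^+ 2 ->
  x \in S0 u v -> y \in T0 u v ->
  exists c n, n \in [:: 3 * u; 3 * v; u * (u - v); v * (u - v)] /\ x * y = c ^+ 2 * n.
Proof.
move=> uv; have Eu : u = 3 * r ^+ 2 - v by rewrite -uv addrK.
rewrite !inE => /or4P[]/eqP-> /orP[]/eqP->.
- by exists (r * u), (3 * v); rewrite !inE eqxx ?orbT; split=> //; rewrite Eu; ring.
- by exists (u + v), (u * (u - v)); rewrite !inE eqxx ?orbT; split=> //; ring.
- by exists u, (v * (u - v)); rewrite !inE eqxx ?orbT; split=> //; ring.
- by exists (r * (u - v)), (3 * u); rewrite !inE eqxx ?orbT; split=> //; rewrite Eu; ring.
- by exists (r * v), (3 * u); rewrite !inE eqxx ?orbT; split=> //; rewrite Eu; ring.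
- by exists (u + v), (v * (u - v)); rewrite !inE eqxx ?orbT; split=> //; ring.
- by exists v, (u * (u - v)); rewrite !inE eqxx ?orbT; split=> //; ring.
- by exists (r * (u - v)), (3 * v); rewrite !inE eqxx ?orbT; split=> //; rewrite Eu; ring.
Qed.

Definition exceptional_pairs : seq (int * int) :=
  [:: (1, 0); (-1, 0); (1, 1); (1, -1); (-1, 1); (-1, -1)].

Lemma exceptional_pairsP r s :
  (`|r| = 1)%N -> (`|s| <= 1)%N -> (r, s) \in exceptional_pairs.
Proof.
move=> r1 s1; have [-> | ->] : r = 1 \/ r = -1 by lia.
all: by have [-> | [-> | ->]] : s = 0 \/ s = 1 \/ s = -1 by lia.
Qed.

Lemma absz_uval r s : `|uval r s|%N = (`|r| ^ 2 + `|s| ^ 2)%N.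
Proof. by rewrite /uval; lia. Qed.

Lemma absz_double_diff (a b : int) (d : int) : d = 2 * a ^+ 2 - b ^+ 2 ->
  (`|d| + `|b| ^ 2 = 2 * `|a| ^ 2 \/ 2 * `|a| ^ 2 + `|d| = `|b| ^ 2)%N.
Proof. by move=> ->; lia. Qed.

Lemma uval_sub_vval r s : uval r s - vval r s = 2 * s ^+ 2 - r ^+ 2.
Proof. by rewrite /uval /vval; ring. Qed.

Lemma uval_add_vval r s : uval r s + vval r s = 3 * r ^+ 2.
Proof. by rewrite /uval /vval; ring. Qed.

Lemma classes_not_sq r s n :
  coprimez r s -> r != 0 -> (r, s) \notin exceptional_pairs ->
  n \in [:: 3 * uval r s; 3 * vval r s;
            uval r s * (uval r s - vval r s); vval r s * (uval r s - vval r s)] ->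
  n != 0 -> forall K, `|n|%N <> (K ^ 2)%N.
Proof.
rewrite coprimezE => cop r0 nF.
have Rpos : (0 < `|r|)%N by rewrite absz_gt0.
have EV := @absz_double_diff r s (vval r s) erefl.
have EW := @absz_double_diff s r _ (uval_sub_vval r s).
have [n10 n11] : ~ (`|r| = 1 /\ `|s| = 0)%N /\ ~ (`|r| = 1 /\ `|s| = 1)%N.
  by split=> -[r1 s1]; move/negP: nF; apply; apply: exceptional_pairsP; lia.
rewrite !inE => /or4P[]/eqP-> n0 K; rewrite abszM ?absz_uval.
- exact/three_times_not_sq/not_3_dvd_sq_sum.
- exact/three_times_not_sq/(not_3_dvd_sq_double_diff cop EV).
- apply: (sq_sum_times_double_diff_not_sq cop Rpos n10 _ EW).
  by move: n0; rewrite mulf_eq0 negb_or absz_gt0 => /andP[].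
- move: n0; rewrite mulf_eq0 negb_or -!absz_gt0 => /andP[Vpos Wpos].
  exact: double_diffs_product_not_sq cop Rpos n11 Vpos Wpos EV EW.
Qed.

Theorem lemma6p4 :
  exists F : seq (int * int),
    forall r s : int, coprimez r s -> r != 0 -> (r, s) \notin F ->
      forall x y : int, x \in Sset r s -> y \in Tset r s ->
        ~ same_sqclass (x%:~R) (y%:~R).
Proof.
exists exceptional_pairs => r s cop r0 nF x y.
rewrite Sset_signed Tset_signed => Hx Hy.
have [a Sa Ea] := mem_signed Hx; have [b Tb Eb] := mem_signed Hy.
case/same_sqclass_product => x_nz y_nz [K HK].
have [c [n [Nn Eab]]] := S0_T0_product (uval_add_vval r s) Sa Tb.
have abs_eq : (`|c| ^ 2 * `|n| = K ^ 2)%N.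
  by rewrite -abszX -abszM -Eab abszM -Ea -Eb HK.
have : a * b != 0.
  by rewrite -absz_eq0 abszM -Ea -Eb muln_eq0 !absz_eq0 negb_or x_nz y_nz.
rewrite Eab mulf_eq0 negb_or expf_eq0 /= => /andP[c0 n0].
have cpos : (0 < `|c|)%N by rewrite absz_gt0.
have [t Et] := sq_cofactor cpos abs_eq.
exact: classes_not_sq cop r0 nF Nn n0 t Et.
Qed.
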